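(* Let $\mathcal T$ be a triangulated category admitting a finitistic generator. Then every object of $\mathcal T$ is homologically finite.
   Context: $\Sigma$ denotes the suspension. For objects $X,Y$ and $n\ge0$, write $h(X,Y)\le n$ if for all $i,j\in\mathbb Z$: $\operatorname{Hom}(X,\Sigma^iY)\ne0\ne\operatorname{Hom}(X,\Sigma^jY)$ implies $|i-j|<n$; $\hom^n(X):=\{Y\mid h(X,Y)\le n\}$. An object $X$ is homologically finite if for every $Y\in\mathcal T$ there is $n\ge 0$ with $h(X,Y)\le n$. With $\operatorname{add}\mathcal X$ the smallest full subcategory containing $\mathcal X$ closed under finite direct sums and summands, set $\operatorname{thick}^0(X)=\operatorname{add}\varnothing$, $\operatorname{thick}^1(X)=\operatorname{add}\{\Sigma^iX\mid i\in\mathbb Z\}$, and for $n>1$, $\operatorname{thick}^n(X)=\operatorname{add}\{\operatorname{cone}\varphi\mid\varphi\colon U\to V,\ U\in\operatorname{thick}^1(X),\ V\in\operatorname{thick}^{n-1}(X)\}$. An object $X$ is a finitistic generator of $\mathcal T$ if $X$ is homologically finite and $\hom^p(X)\subseteq\operatorname{thick}^p(X)$ for all $p\ge0$. *)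

From HB Require Import structures.
From mathcomp Require Import all_boot all_order all_algebra.
Set Implicit Arguments. Unset Strict Implicit. Unset Printing Implicit Defensive.
Import GRing.Theory Num.Theory.
Local Open Scope ring_scope.

Record TriangulatedCategory := TriCat {
  Obj :> Type;
  Hom : Obj -> Obj -> zmodType;
  comp : forall X Y Z : Obj, Hom Y Z -> Hom X Y -> Hom X Z;
  idm : forall X : Obj, Hom X X;
  compA : forall (W X Y Z : Obj) (h : Hom Y Z) (g : Hom X Y) (f : Hom W X),
      comp h (comp g f) = comp (comp h g) f;
  comp1m : forall (X Y : Obj) (f : Hom X Y), comp (idm Y) f = f;
  compm1 : forall (X Y : Obj) (f : Hom X Y), comp f (idm X) = f;
  compDl : forall (X Y Z : Obj) (g g' : Hom Y Z) (f : Hom X Y),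
      comp (g + g') f = comp g f + comp g' f;
  compDr : forall (X Y Z : Obj) (g : Hom Y Z) (f f' : Hom X Y),
      comp g (f + f') = comp g f + comp g f';
  zero_exists : exists Z : Obj, idm Z = 0;
  biprod_exists : forall X Y : Obj, exists (B : Obj) (i1 : Hom X B) (i2 : Hom Y B)
      (p1 : Hom B X) (p2 : Hom B Y),
      [/\ comp p1 i1 = idm X, comp p2 i2 = idm Y, comp p1 i2 = 0,
          comp p2 i1 = 0 & comp i1 p1 + comp i2 p2 = idm B];
  Sh : Obj -> Obj;
  shm : forall X Y : Obj, Hom X Y -> Hom (Sh X) (Sh Y);
  shm_comp : forall (X Y Z : Obj) (g : Hom Y Z) (f : Hom X Y),
      shm (comp g f) = comp (shm g) (shm f);
  shm_id : forall X : Obj, shm (idm X) = idm (Sh X);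
  shm_add : forall (X Y : Obj) (f g : Hom X Y), shm (f + g) = shm f + shm g;
  shm_bij : forall X Y : Obj, bijective (@shm X Y);
  Shi : Obj -> Obj;
  Shi_iso : forall X : Obj, exists (f : Hom (Sh (Shi X)) X) (g : Hom X (Sh (Shi X))),
      comp g f = idm _ /\ comp f g = idm _;
  dist : forall X Y Z : Obj, Hom X Y -> Hom Y Z -> Hom Z (Sh X) -> Prop;
  dist_iso : forall (X Y Z X' Y' Z' : Obj)
      (f : Hom X Y) (g : Hom Y Z) (h : Hom Z (Sh X))
      (f' : Hom X' Y') (g' : Hom Y' Z') (h' : Hom Z' (Sh X'))
      (u : Hom X X') (v : Hom Y Y') (w : Hom Z Z'),
      (exists u', comp u' u = idm X /\ comp u u' = idm X') ->
      (exists v', comp v' v = idm Y /\ comp v v' = idm Y') ->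
      (exists w', comp w' w = idm Z /\ comp w w' = idm Z') ->
      comp v f = comp f' u -> comp w g = comp g' v -> comp (shm u) h = comp h' w ->
      dist f g h -> dist f' g' h';
  dist_id : forall X Z : Obj, idm Z = 0 -> dist (idm X) (0 : Hom X Z) (0 : Hom Z (Sh X));
  dist_ext : forall (X Y : Obj) (f : Hom X Y),
      exists (Z : Obj) (g : Hom Y Z) (h : Hom Z (Sh X)), dist f g h;
  dist_rot : forall (X Y Z : Obj) (f : Hom X Y) (g : Hom Y Z) (h : Hom Z (Sh X)),
      dist f g h <-> dist g h (- shm f);
  dist_morph : forall (X Y Z X' Y' Z' : Obj)
      (f : Hom X Y) (g : Hom Y Z) (h : Hom Z (Sh X))
      (f' : Hom X' Y') (g' : Hom Y' Z') (h' : Hom Z' (Sh X'))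
      (u : Hom X X') (v : Hom Y Y'),
      dist f g h -> dist f' g' h' -> comp v f = comp f' u ->
      exists w : Hom Z Z', comp w g = comp g' v /\ comp (shm u) h = comp h' w;
  dist_oct : forall (X Y Z Z' X' Y' : Obj) (f : Hom X Y) (g : Hom Y Z)
      (i1 : Hom Y Z') (j1 : Hom Z' (Sh X))
      (i2 : Hom Z X') (j2 : Hom X' (Sh Y))
      (i3 : Hom Z Y') (j3 : Hom Y' (Sh X)),
      dist f i1 j1 -> dist g i2 j2 -> dist (comp g f) i3 j3 ->
      exists (u : Hom Z' Y') (v : Hom Y' X'),
        [/\ dist u v (comp (shm i1) j2),
            comp u i1 = comp i3 g, comp j3 u = j1,
            comp v i3 = i2 & comp j2 v = comp (shm f) j3]
}.

Arguments comp {t X Y Z}.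
Arguments idm {t}.
Arguments Sh {t}.
Arguments Shi {t}.
Arguments shm {t X Y}.
Arguments dist {t X Y Z}.

Section Defs.
Variable T : TriangulatedCategory.

Definition Shpow (i : int) (X : T) : T :=
  match i with
  | Posz n => iter n Sh X
  | Negz n => iter n.+1 Shi X
  end.

Definition hom_nonzero (X Y : T) : Prop := exists f : Hom X Y, f != 0.

Definition h_le (X Y : T) (n : nat) : Prop :=
  forall i j : int, hom_nonzero X (Shpow i Y) -> hom_nonzero X (Shpow j Y) ->
    (`|i - j| < n)%N.

Definition homn (n : nat) (X : T) : T -> Prop := fun Y => h_le X Y n.

Definition homologically_finite (X : T) : Prop :=
  forall Y : T, exists n : nat, h_le X Y n.

Definition is_zero_obj (Z : T) : Prop := idm Z = 0.

Definition is_biproduct (B X Y : T) : Prop :=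
  exists (i1 : Hom X B) (i2 : Hom Y B) (p1 : Hom B X) (p2 : Hom B Y),
    [/\ comp p1 i1 = idm X, comp p2 i2 = idm Y, comp p1 i2 = 0,
        comp p2 i1 = 0 & comp i1 p1 + comp i2 p2 = idm B].

Definition is_summand (Y Z : T) : Prop :=
  exists (s : Hom Y Z) (r : Hom Z Y), comp r s = idm Y.

Inductive add (P : T -> Prop) : T -> Prop :=
  | add_base X : P X -> add P X
  | add_zero Z : is_zero_obj Z -> add P Z
  | add_sum B X Y : add P X -> add P Y -> is_biproduct B X Y -> add P B
  | add_summand Y Z : add P Z -> is_summand Y Z -> add P Y.

Definition is_cone (U V : T) (phi : Hom U V) (W : T) : Prop :=
  exists (g : Hom V W) (h : Hom W (Sh U)), dist phi g h.

Fixpoint thick (n : nat) (X : T) : T -> Prop :=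
  match n with
  | 0 => add (fun _ => False)
  | 1 => add (fun Y => exists i : int, Y = Shpow i X)
  | S ((S m') as m) => add (fun W => exists (U V : T) (phi : Hom U V),
                   add (fun Y => exists i : int, Y = Shpow i X) U /\
                   thick m X V /\ is_cone phi W)
  end.

Definition finitistic_generator (X : T) : Prop :=
  homologically_finite X /\
  forall (p : nat) (Y : T), homn p X Y -> thick p X Y.

End Defs.

(* Fix a test object Y and call A "Y-bounded" when Hom(A, Sigma^i Y) vanishes
   for all but finitely many i, i.e. for |i| > n for some n.  This is the
   "bounded around degree 0" version of h(A,Y) < oo, and unlike h(-,Y) it is
   stable under the constructions defining thick^p(G):
   - it is preserved by Sigma and its quasi-inverse, hence by all Sigma^k;
   - it holds for zero objects and passes to biproducts and direct summands;
   - it passes to cones: for a triangle U -> V -> W -> Sigma U, a nonzero map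
     W -> Sigma^i Y either restricts nontrivially to V or factors through
     W -> Sigma U (exactness of Hom(-, Sigma^i Y)), giving a nonzero map
     U -> Sigma^(i-1) Y.
   Hence Y-boundedness of G propagates to every object of thick^p(G).  Given X,
   homological finiteness of G puts X in hom^n(G), which lies in thick^n(G) since
   G is a finitistic generator; G is Y-bounded because h(G,Y) is finite, so X is
   Y-bounded, and Y-boundedness of X bounds h(X,Y). *)
From Pilot Require Import Defs.
From mathcomp Require Import all_boot all_order all_algebra.
From mathcomp Require Import zify.
From Stdlib Require Import Classical.
(* Re-import so that Hom refers to the category, not to MathComp's 'Hom. *)
Import Pilot.Defs.
Set Implicit Arguments. Unset Strict Implicit. Unset Printing Implicit Defensive.
Import GRing.Theory.
Local Open Scope ring_scope.

Section TriangulatedFacts.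
Variable T : TriangulatedCategory.

Lemma comp0l (X Y Z : T) (f : Hom X Y) : comp (0 : Hom Y Z) f = 0.
Proof. by apply: (@addrI _ (comp 0 f)); rewrite -compDl !addr0. Qed.

Lemma comp0r (X Y Z : T) (g : Hom Y Z) : comp g (0 : Hom X Y) = 0.
Proof. by apply: (@addrI _ (comp g 0)); rewrite -compDr !addr0. Qed.

Lemma compNl (X Y Z : T) (g : Hom Y Z) (f : Hom X Y) :
  comp (- g) f = - comp g f.
Proof. by apply/eqP; rewrite -addr_eq0 -compDl addNr comp0l. Qed.

Lemma shm0 (X Y : T) : shm (0 : Hom X Y) = 0.
Proof. by apply: (@addrI _ (shm (0 : Hom X Y))); rewrite -shm_add !addr0. Qed.

Definition iso (A B : T) : Prop :=
  exists (f : Hom A B) (g : Hom B A), comp g f = idm A /\ comp f g = idm B.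

Lemma iso_sym (A B : T) : iso A B -> iso B A.
Proof. by case=> f [g [gf fg]]; exists g, f. Qed.

Lemma iso_refl (A : T) : iso A A.
Proof. by exists (idm A), (idm A); rewrite comp1m. Qed.

Lemma iso_Shi (A : T) : iso A (Sh (Shi A)).
Proof. by have [f [g [gf fg]]] := Shi_iso A; exists g, f. Qed.

Lemma hom_nonzero_isor (A B B' : T) :
  iso B B' -> hom_nonzero A B -> hom_nonzero A B'.
Proof.
case=> u [v [vu _]] [f f_nz]; exists (comp u f); apply: contraNneq f_nz => uf0.
by rewrite -[f]comp1m -vu -compA uf0 comp0r.
Qed.

Lemma hom_nonzero_isol (A A' B : T) :
  iso A A' -> hom_nonzero A B -> hom_nonzero A' B.
Proof.
case=> u [v [vu _]] [f f_nz]; exists (comp f v); apply: contraNneq f_nz => fv0.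
by rewrite -[f]compm1 -vu compA fv0 comp0l.
Qed.

Lemma hom_nonzero_Sh (A B : T) :
  hom_nonzero A B <-> hom_nonzero (Sh A) (Sh B).
Proof.
have [k shmK kK] := shm_bij A B.
split=> [[f f_nz] | [g g_nz]].
- exists (shm f); apply: contraNneq f_nz => /(congr1 k).
  by rewrite shmK -(shm0 A B) shmK => ->.
- exists (k g); apply: contraNneq g_nz => /(congr1 shm).
  by rewrite kK shm0 => ->.
Qed.

Lemma Sh_Shpow (Y : T) (i : int) : iso (Sh (Shpow i Y)) (Shpow (i + 1) Y).
Proof.
case: i => [n | [|m]].
- have -> : Posz n + 1 = Posz n.+1 by lia.
  exact: iso_refl.
- have -> : Negz 0 + 1 = Posz 0 by lia.
  exact: iso_sym (iso_Shi Y).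
- have -> : Negz m.+1 + 1 = Negz m by lia.
  exact: iso_sym (iso_Shi (iter m.+1 Shi Y)).
Qed.

(* We map the rotated triangle V -> W -> Sigma U into the
   split triangle 0 -> Sigma (Shi Z) -> Sigma (Shi Z) -> 0 using f. *)
Lemma cone_exact (U V W Z : T) (phi : Hom U V)
    (g : Hom V W) (h : Hom W (Sh U)) (f : Hom W Z) :
  dist phi g h -> comp f g = 0 -> exists t : Hom (Sh U) Z, f = comp t h.
Proof.
move=> Dphi fg0.
have [O O0] := zero_exists T.
have Dg := proj1 (dist_rot phi g h) Dphi.
have Dsplit := proj1 (dist_rot _ _ _)
  (proj1 (dist_rot (idm (Shi Z)) _ _) (dist_id (Shi Z) O0)).
have [e [e' [e'e ee']]] := Shi_iso Z.
have [w [wh _]] := dist_morph Dg Dsplit (u := 0 : Hom V O) (v := comp e' f)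
  (ltac:(by rewrite -compA fg0 !comp0r)).
exists (comp e (- w)).
by rewrite -compA compNl wh compNl shm_id comp1m opprK compA ee' comp1m.
Qed.

End TriangulatedFacts.

Section Bounded.
Variables (T : TriangulatedCategory) (Y : T).

Definition Y_bounded (A : T) : Prop :=
  exists n : nat, forall i : int, hom_nonzero A (Shpow i Y) -> (absz i <= n)%N.

Lemma hom_nonzero_Sh_Shpow (A : T) (i : int) :
  hom_nonzero (Sh A) (Shpow i Y) -> hom_nonzero A (Shpow (i - 1) Y).
Proof.
move=> nz; apply/hom_nonzero_Sh; apply: hom_nonzero_isor nz; apply: iso_sym.
by have := Sh_Shpow Y (i - 1); rewrite subrK.
Qed.

Lemma hom_nonzero_Shi_Shpow (A : T) (i : int) :
  hom_nonzero (Shi A) (Shpow i Y) -> hom_nonzero A (Shpow (i + 1) Y).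
Proof.
move/hom_nonzero_Sh => nz; apply: hom_nonzero_isor (Sh_Shpow Y i) _.
exact: hom_nonzero_isol (iso_sym (iso_Shi A)) nz.
Qed.

Lemma Y_bounded_Shpow (A : T) (k : int) : Y_bounded A -> Y_bounded (Shpow k A).
Proof.
have bSh B : Y_bounded B -> Y_bounded (Sh B).
  by case=> n Bn; exists n.+1 => i /hom_nonzero_Sh_Shpow /Bn; lia.
have bShi B : Y_bounded B -> Y_bounded (Shi B).
  by case=> n Bn; exists n.+1 => i /hom_nonzero_Shi_Shpow /Bn; lia.
move=> bA; case: k => n /=; elim: n => [|n IH] /=; auto.
Qed.

Lemma Y_bounded_zero (Z : T) : is_zero_obj Z -> Y_bounded Z.
Proof.
move=> Z0; exists 0%N => i [f f_nz]; exfalso; move/eqP: f_nz; apply.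
by rewrite -[f]compm1 Z0 comp0r.
Qed.

Lemma Y_bounded_summand (A B : T) :
  is_summand A B -> Y_bounded B -> Y_bounded A.
Proof.
case=> s [r rs] [n Bn]; exists n => i [f f_nz]; apply: Bn.
exists (comp f r); apply: contraNneq f_nz => fr0.
by rewrite -[f]compm1 -rs compA fr0 comp0l.
Qed.

(* A map out of a biproduct is nonzero on one of the two summands. *)
Lemma Y_bounded_biprod (B X1 X2 : T) :
  is_biproduct B X1 X2 -> Y_bounded X1 -> Y_bounded X2 -> Y_bounded B.
Proof.
case=> i1 [i2 [p1 [p2 [_ _ _ _ split_id]]]] [n1 X1n] [n2 X2n].
exists (n1 + n2)%N => i [f f_nz].
have f_split : f = comp (comp f i1) p1 + comp (comp f i2) p2.
  by rewrite -!compA -compDr split_id compm1.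
have [fi1_0 | fi1_nz] := eqVneq (comp f i1) 0; last first.
  by have := X1n i (ex_intro (fun k => k != 0) _ fi1_nz); lia.
have [fi2_0 | fi2_nz] := eqVneq (comp f i2) 0; last first.
  by have := X2n i (ex_intro (fun k => k != 0) _ fi2_nz); lia.
by case/eqP: f_nz; rewrite f_split fi1_0 fi2_0 !comp0l addr0.
Qed.

(* Two-out-of-three for cones, via exactness of Hom(-, Sigma^i Y). *)
Lemma Y_bounded_cone (U V W : T) (phi : Hom U V) :
  is_cone phi W -> Y_bounded U -> Y_bounded V -> Y_bounded W.
Proof.
case=> g [h Dphi] [n1 Un] [n2 Vn].
exists (n1.+1 + n2)%N => i [f f_nz].
have [fg0 | fg_nz] := eqVneq (comp f g) 0; last first.
  by have := Vn i (ex_intro (fun k => k != 0) _ fg_nz); lia.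
have [t f_th] := cone_exact Dphi fg0.
have t_nz : t != 0 by apply: contraNneq f_nz => t0; rewrite f_th t0 comp0l.
by have := Un _ (hom_nonzero_Sh_Shpow (ex_intro (fun k => k != 0) _ t_nz)); lia.
Qed.

Lemma Y_bounded_add (Q : T -> Prop) :
  (forall A, Q A -> Y_bounded A) -> forall A, add Q A -> Y_bounded A.
Proof.
move=> bQ A; elim=> {A} [A /bQ //| Z /Y_bounded_zero //| | A B _ bB sAB].
- by move=> B X1 X2 _ b1 _ b2 bB; exact: Y_bounded_biprod bB b1 b2.
- exact: Y_bounded_summand sAB bB.
Qed.

Lemma Y_bounded_thick (G : T) :
  Y_bounded G -> forall (p : nat) (A : T), thick p G A -> Y_bounded A.
Proof.
move=> bG.
have b1 A : thick 1 G A -> Y_bounded A.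
  by apply: Y_bounded_add => B [i ->]; exact: Y_bounded_Shpow.
elim=> [|[|p] IH]; [exact: Y_bounded_add | exact: b1 |].
apply: Y_bounded_add => W [U [V [phi [U1 [Vp cone]]]]].
exact: Y_bounded_cone cone (b1 _ U1) (IH _ Vp).
Qed.

(* Finite h(A,Y) makes A Y-bounded: all nonzero degrees lie near any one of
   them (and there may be none at all). *)
Lemma Y_bounded_of_h_le (A : T) (n : nat) : h_le A Y n -> Y_bounded A.
Proof.
move=> hAY.
have [[i0 nz0] | no_nz] := classic (exists i0, hom_nonzero A (Shpow i0 Y)).
- by exists (n + absz i0)%N => i nz; have := hAY _ _ nz nz0; lia.
- by exists 0%N => i nz; case: no_nz; exists i.
Qed.

Lemma h_le_of_Y_bounded (A : T) :
  Y_bounded A -> exists n : nat, h_le A Y n.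
Proof.
case=> m Am; exists (m + m + 1)%N => i j nz_i nz_j.
by have := Am _ nz_i; have := Am _ nz_j; lia.
Qed.

End Bounded.

Theorem mainTheorem3 (T : TriangulatedCategory) :
  (exists G : T, finitistic_generator G) ->
  forall X : T, homologically_finite X.
Proof.
case=> G [G_finite G_generates] X Y.
have [n hGX] := G_finite X.
have X_thick : thick n G X := G_generates n X hGX.
have [m hGY] := G_finite Y.
apply: h_le_of_Y_bounded.
exact: Y_bounded_thick (Y_bounded_of_h_le hGY) n X X_thick.
Qed.
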